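(* Let $p \ge 2$ be an integer, let $k = 2^{p-1}$, and let $M$ be the $k \times (p+1)$ model matrix of the main effect model of the $2^{p-1}$ fractional factorial design of resolution $p$ (defined in the context). Then the set $\mathcal{B}^*$ of all square-free degree $2$ moves for $M'$ is a Markov basis for $M'$; consequently, a minimal Markov basis for $M'$ can be constructed from square-free degree $2$ moves.
   Context: Cells (runs) are indexed by $\mathbf{i} = (i_1,\ldots,i_{p-1}) \in \mathcal{I} = \{0,1\}^{p-1}$, so $|\mathcal{I}| = k = 2^{p-1}$. The $2^{p-1}$ fractional factorial design of resolution $p$ for $p$ two-level factors (levels $\pm 1$) is the design with defining relation that the product of all $p$ factors equals the identity: in run $\mathbf{i}$, factor $m$ ($1 \le m \le p-1$) is at level $(-1)^{i_m}$ and factor $p$ is at level $(-1)^{i_1+\cdots+i_{p-1}}$. The model matrix $M$ of the main effect model has one row per run $\mathbf{i}$, equal to $\big(1, (-1)^{i_1}, \ldots, (-1)^{i_{p-1}}, (-1)^{i_1+\cdots+i_{p-1}}\big)$; $M'$ is its transpose. Vectors in $\mathbb{Z}^k$ are indexed by $\mathcal{I}$. A move for $M'$ is a $\mathbf{z} \in \mathbb{Z}^k$ with $M'\mathbf{z} = \mathbf{0}$ (equivalently: for every $m$ and every $a\in\{0,1\}$, $\sum_{\mathbf{i}: i_m = a} z(\mathbf{i}) = 0$, and $\sum_{\mathbf{i}: \sum_m i_m \text{ even}} z(\mathbf{i}) = \sum_{\mathbf{i}: \sum_m i_m \text{ odd}} z(\mathbf{i}) = 0$). For $\mathbf{b} \in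 \mathbb{N}^k$ ($\mathbb{N}=\{0,1,2,\ldots\}$), the fiber is $\mathcal{F}(M'\mathbf{b}) = \{\mathbf{y} \in \mathbb{N}^k : M'\mathbf{y} = M'\mathbf{b}\}$. For a set $\mathcal{B}$ of moves, let $G(\mathbf{b},\mathcal{B})$ be the graph with vertex set $\mathcal{F}(M'\mathbf{b})$ and an edge between $\mathbf{x},\mathbf{y}$ whenever $\mathbf{y} - \mathbf{x} \in \mathcal{B}$ or $\mathbf{x} - \mathbf{y} \in \mathcal{B}$. A finite set $\mathcal{B}$ of moves is a Markov basis for $M'$ if $G(\mathbf{b},\mathcal{B})$ is connected for every $\mathbf{b} \in \mathbb{N}^k$; it is minimal if no proper subset is a Markov basis. A square-free degree $2$ move is a move $\mathbf{z}$ such that for some distinct cells $\mathbf{i}_1,\mathbf{i}_2,\mathbf{i}_3,\mathbf{i}_4$, $z(\mathbf{i}_1)=z(\mathbf{i}_2)=1$, $z(\mathbf{i}_3)=z(\mathbf{i}_4)=-1$, and $z(\mathbf{i})=0$ for all other cells. *)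

From Stdlib Require Import Relations.
From mathcomp Require Import all_boot all_order all_algebra.
Set Implicit Arguments. Unset Strict Implicit. Unset Printing Implicit Defensive.
Import Order.TTheory GRing.Theory Num.Theory.
Local Open Scope ring_scope.

(* Cells i = (i_1,...,i_{p-1}) in {0,1}^{p-1}; bit true = 1. *)
Definition cell (p : nat) := {ffun 'I_(p.-1) -> bool}.

(* Columns of the model matrix M (p+1 of them):
   None            = intercept column (all ones),
   Some (Some m)   = factor m+1 (m : 'I_(p-1)),
   Some None       = factor p (product of the others). *)
Definition mcol (p : nat) := option (option 'I_(p.-1)).

Definition Mentry (p : nat) (i : cell p) (c : mcol p) : int :=
  match c with
  | None => 1
  | Some (Some m) => (-1) ^+ (i m)
  | Some None => (-1) ^+ (\sum_(m : 'I_(p.-1)) nat_of_bool (i m))%N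
  end.

Definition Mt (p : nat) (z : cell p -> int) (c : mcol p) : int :=
  \sum_(i : cell p) Mentry i c * z i.

Definition vec (p : nat) := {ffun cell p -> int}.
Definition nvec (p : nat) := {ffun cell p -> nat}.

Definition is_move (p : nat) (z : vec p) : Prop := forall c : mcol p, Mt z c = 0.

Definition fiber (p : nat) (b y : nvec p) : Prop :=
  forall c : mcol p, Mt (fun i => (y i)%:Z) c = Mt (fun i => (b i)%:Z) c.

Definition edge (p : nat) (B : vec p -> Prop) (b : nvec p) (x y : nvec p) : Prop :=
  fiber b x /\ fiber b y /\
  exists z : vec p, B z /\
    ((forall i, (y i)%:Z - (x i)%:Z = z i) \/ (forall i, (x i)%:Z - (y i)%:Z = z i)).

Definition fiber_connected (p : nat) (B : vec p -> Prop) (b : nvec p) : Prop :=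
  forall x y : nvec p, fiber b x -> fiber b y -> clos_refl_trans _ (edge B b) x y.

Definition markov_basis (p : nat) (B : vec p -> Prop) : Prop :=
  (exists s : seq (vec p), forall z, B z -> z \in s) /\
  (forall z, B z -> is_move z) /\
  (forall b : nvec p, fiber_connected B b).

Definition minimal_markov_basis (p : nat) (B : vec p -> Prop) : Prop :=
  markov_basis B /\
  forall B' : vec p -> Prop, (forall z, B' z -> B z) -> (exists z, B z /\ ~ B' z) ->
    ~ markov_basis B'.

Definition sqfree_deg2_move (p : nat) (z : vec p) : Prop :=
  is_move z /\
  exists i1 i2 i3 i4 : cell p,
    uniq [:: i1; i2; i3; i4] /\
    z i1 = 1 /\ z i2 = 1 /\ z i3 = -1 /\ z i4 = -1 /\
    (forall i, i \notin [:: i1; i2; i3; i4] -> z i = 0).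

(* Write a run as the levels of the first p-1 factors; the level of the last
   factor is then their parity, and a fiber is fixed by the total count, the
   p-1 margins and the number of runs of odd parity.  Two tables of a fiber are
   connected by square-free degree 2 exchanges, by induction on the number of
   factors their supports use.  For the last such factor k, exchanges first make
   the number of runs whose bit k and parity are both 1 agree: if neither table
   allows such a step, the supports are so rigid that some margin differs.  Summing out factor k then gives two tables of a fiber of the
   smaller design, connected by induction, and every exchange there lifts to one
   preserving that count.  Tables with the same projection and the same count
   are finally connected by exchanges swapping bit k between two runs, each
   decreasing the L1 distance.  A minimal Markov basis is obtained from any
   finite one by minimizing the number of its moves. *)

From mathcomp Require Import all_boot all_order all_algebra.
From mathcomp Require Import boolp zify.
From Stdlib Require Import Relations.
Set Implicit Arguments. Unset Strict Implicit. Unset Printing Implicit Defensive.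

Local Notation bits n := {ffun 'I_n -> bool}.
Local Notation table n := {ffun bits n -> nat}.

Lemma ltn_sum_at (I : finType) (F G : I -> nat) i :
  (forall j, F j <= G j) -> F i < G i -> \sum_j F j < \sum_j G j.
Proof.
move=> le lt; rewrite (bigD1 i) //= [X in _ < X](bigD1 i) //=.
by rewrite -addSn leq_add // leq_sum.
Qed.

Lemma neq_ffun (I : finType) (T : eqType) (f g : {ffun I -> T}) :
  f != g -> exists i, f i != g i.
Proof.
move=> fg; case: (boolP [exists i, f i != g i]) => [/existsP// | /existsPn same].
by case/eqP: fg; apply/ffunP => i; apply/eqP/negPn/same.
Qed.

Section Exchanges.

Variable n : nat.
Implicit Types (x y : table n) (a b c d t : bits n) (F G : bits n -> nat).

Definition parity t := odd (\sum_j t j).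

Definition set_bit (j : 'I_n) (v : bool) t : bits n :=
  [ffun i => if i == j then v else t i].

Lemma set_bitE j v t i : set_bit j v t i = if i == j then v else t i.
Proof. by rewrite ffunE. Qed.

Lemma parity_set_bit j v t : parity (set_bit j v t) = parity t (+) t j (+) v.
Proof.
rewrite /parity (bigD1 j) //= [in RHS](bigD1 j) //= set_bitE eqxx.
under eq_bigr => i /negbTE ne do rewrite set_bitE ne.
by rewrite !oddD !oddb; case: v; case: (t j); case: (odd _).
Qed.

Lemma set_bit_set j v w t : set_bit j v (set_bit j w t) = set_bit j v t.
Proof. by apply/ffunP => i; rewrite !set_bitE; case: (i == j). Qed.

Lemma set_bit_id j t : set_bit j (t j) t = t.
Proof. by apply/ffunP => i; rewrite set_bitE; case: eqP => // ->. Qed.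

Definition wsum x F := \sum_t x t * F t.

Lemma wsumD x F G : wsum x (fun t => F t + G t) = wsum x F + wsum x G.
Proof. by rewrite -big_split; apply: eq_bigr => t _; rewrite mulnDr. Qed.

Lemma eq_wsum x F G : F =1 G -> wsum x F = wsum x G.
Proof. by move=> eFG; apply: eq_bigr => t _; rewrite eFG. Qed.

Lemma leq_wsum x F G : (forall t, 0 < x t -> F t <= G t) -> wsum x F <= wsum x G.
Proof.
move=> leFG; apply: leq_sum => t _; case: (posnP (x t)) => [-> // | /leFG].
by rewrite leq_mul2l orbC => ->.
Qed.

Lemma wsum_gt0 x F : 0 < wsum x F -> exists t, 0 < x t /\ 0 < F t.
Proof.
rewrite lt0n sum_nat_eq0 => /forallPn[t /=]; rewrite muln_eq0 negb_or -!lt0n.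
by case/andP; exists t.
Qed.

Lemma sum_delta F a : \sum_t (t == a) * F t = F a.
Proof.
rewrite (bigD1 a) //= eqxx mul1n big1 ?addn0 // => t /negbTE ->.
exact: mul0n.
Qed.

Definition total x := wsum x (fun=> 1).
Definition margin j x := wsum x (fun t => t j).
Definition odd_count x := wsum x parity.
Definition stats x := (total x, [ffun j => margin j x], odd_count x).

Lemma statsP x y : stats x = stats y <->
  [/\ total x = total y, forall j, margin j x = margin j y & odd_count x = odd_count y].
Proof.
split=> [[ht /ffunP hm ho] | [ht hm ho]].
  by split=> // j; have := hm j; rewrite !ffunE.
by rewrite /stats ht ho; congr (_, _, _); apply/ffunP => j; rewrite !ffunE.
Qed.

Lemma stats_bit_count x y j v : stats x = stats y ->
  wsum x (fun t => t j == v) = wsum y (fun t => t j == v).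
Proof.
have split_total z : wsum z (fun t => t j == false) + margin j z = total z.
  by rewrite -wsumD; apply: eq_wsum => t; case: (t j).
have true_margin z : wsum z (fun t => t j == true) = margin j z.
  by apply: eq_wsum => t; rewrite eqb_id.
case/statsP=> ht hm _; case: v; first by rewrite !true_margin hm.
by apply: (@addIn (margin j x)); rewrite split_total hm split_total.
Qed.

Definition exchange a b c d :=
  [/\ uniq [:: a; b; c; d], forall j, a j + b j = c j + d j
    & parity a + parity b = parity c + parity d].

Definition apply_exchange x a b c d : table n :=
  [ffun t => x t + (t == c) + (t == d) - (t == a) - (t == b)].

Lemma apply_exchangeE x a b c d t : a != b -> 0 < x a -> 0 < x b ->
  apply_exchange x a b c d t + (t == a) + (t == b) = x t + (t == c) + (t == d).
Proof.
move=> ab xa xb; rewrite ffunE -subnDA -addnA subnK // -addnA.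
have [->|ta] := eqVneq t a; first by rewrite (negbTE ab) ltn_addr.
by have [->|tb] := eqVneq t b; rewrite ?ltn_addr.
Qed.

Lemma wsum_apply_exchange x a b c d F : a != b -> 0 < x a -> 0 < x b ->
  wsum (apply_exchange x a b c d) F + F a + F b = wsum x F + F c + F d.
Proof.
move=> ab xa xb; rewrite -!(sum_delta F) /wsum -!big_split /=.
under eq_bigr do rewrite -!mulnDl apply_exchangeE //.
by apply: eq_bigr => t _; rewrite !mulnDl.
Qed.

Lemma wsum_exchange x a b c d F : a != b -> 0 < x a -> 0 < x b ->
  F a + F b = F c + F d -> wsum (apply_exchange x a b c d) F = wsum x F.
Proof.
move=> ab xa xb e; apply/(@addIn (F a + F b)).
by rewrite addnA wsum_apply_exchange // e addnA.
Qed.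

Lemma exchange_sym a b c d : exchange a b c d -> exchange c d a b.
Proof.
by case=> u hj hp; split=> [|j|]; rewrite ?hj ?hp // -(rot_uniq 2).
Qed.

Definition exchange_step x y := exists a b c d,
  [/\ exchange a b c d, 0 < x a, 0 < x b & y = apply_exchange x a b c d].

Definition reachable := clos_refl_trans _ exchange_step.

Lemma exchange_step_sym x y : exchange_step x y -> exchange_step y x.
Proof.
case=> a [b [c [d [e xa xb ->]]]]; have [u _ _] := e.
move: (u); rewrite /= !inE !negb_or => /and4P[/and3P[ab ac ad] /andP[bc bd] cd _].
set x' := apply_exchange x a b c d.
have [pc pd] : 0 < x' c /\ 0 < x' d.
  rewrite !ffunE (eq_sym c a) (eq_sym c b) (eq_sym d a) (eq_sym d b).
  by rewrite (negbTE ac) (negbTE ad) (negbTE bc) (negbTE bd) !subn0 !eqxx addn1 addnS.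
exists c, d, a, b; split; [exact: exchange_sym | by [] | by [] |].
apply/ffunP => t; apply/(@addIn ((t == c) + (t == d))); rewrite !addnA.
by rewrite (apply_exchangeE _ _ _ cd) // apply_exchangeE.
Qed.

Lemma reachable_sym x y : reachable x y -> reachable y x.
Proof.
elim=> [u v uv | u | u v w _ vu _ wv]; first exact/rt_step/exchange_step_sym.
- exact: rt_refl.
- exact: rt_trans wv vu.
Qed.

Lemma exchange_step_stats x y : exchange_step x y -> stats x = stats y.
Proof.
case=> a [b [c [d [[u hj hp] xa xb ->]]]].
have ab : a != b by case/andP: u; rewrite inE negb_or => /andP[].
by apply/esym/statsP; split=> [|j|]; apply: wsum_exchange.
Qed.

Lemma reachable_stats x y : reachable x y -> stats x = stats y.
Proof. by elim=> [u v /exchange_step_stats | | u v w _ -> _ ->]. Qed.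

Definition supported_below m x :=
  forall t, 0 < x t -> forall j : 'I_n, m <= j -> t j = false.

Lemma exchange_step_supported_below m x y :
  exchange_step x y -> supported_below m x -> supported_below m y.
Proof.
case=> a [b [c [d [[_ hj _] xa xb ->]]]] sx t pos j mj.
have := hj j; rewrite (sx a xa j mj) (sx b xb j mj).
have [->|tc] := eqVneq t c; first by case: (c j).
have [->|td] := eqVneq t d; first by case: (c j); case: (d j).
move=> _; apply: (sx t _ j mj); apply: leq_trans pos _.
by rewrite ffunE (negbTE tc) (negbTE td) !addn0 -subnDA leq_subr.
Qed.

Lemma reachable_supported_below m x y :
  reachable x y -> supported_below m x -> supported_below m y.
Proof.
elim=> [u v | // | u v w _ uv _ vw /uv /vw //].
exact: exchange_step_supported_below.
Qed.

Lemma swap_exchange a b (j k : 'I_n) : a j != b j -> k != j -> a k != b k ->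
  parity a != parity b -> exchange a b (set_bit j (b j) a) (set_bit j (a j) b).
Proof.
move=> abj kj abk pab.
have diff (t u : bits n) i : t i != u i -> t != u by apply: contraNneq => ->.
set c := set_bit j (b j) a; set d := set_bit j (a j) b.
have [cj dj] : c j = b j /\ d j = a j by rewrite !set_bitE eqxx.
have [ck dk] : c k = a k /\ d k = b k by rewrite !set_bitE (negbTE kj).
have ac : a != c by apply: (diff _ _ j); rewrite cj.
have ad : a != d by apply: (diff _ _ k); rewrite dk.
have bc : b != c by apply: (diff _ _ k); rewrite ck eq_sym.
have bd : b != d by apply: (diff _ _ j); rewrite dj eq_sym.
have cd : c != d by apply: (diff _ _ k); rewrite ck dk.
split.
- by rewrite /= !inE !negb_or (diff _ _ _ abk) ac ad bc bd cd.
- by move=> i; rewrite !set_bitE; case: eqP => [->|]; rewrite // addnC.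
- rewrite !parity_set_bit.
  by move: abj pab; case: (a j); case: (b j); case: (parity a); case: (parity b).
Qed.

Lemma apply_exchange_id x a b : apply_exchange x a b a b = x.
Proof. by apply/ffunP => t; rewrite ffunE -subnDA -addnA addnK. Qed.

Lemma wsum_lt_witness x y (P : pred (bits n)) t :
  wsum x P = wsum y P -> P t -> x t < y t -> exists2 u, P u & y u < x u.
Proof.
move=> eq Pt lt.
case: (boolP [exists u, P u && (y u < x u)]) => [/existsP[u /andP[]]|/existsPn none].
  by exists u.
suff : wsum x P < wsum y P by rewrite eq ltnn.
apply: (@ltn_sum_at _ _ _ t) => [u|]; last by rewrite Pt !muln1.
by case Pu: (P u); rewrite ?muln0 ?muln1 //; move: (none u); rewrite Pu /= -leqNgt.
Qed.

Definition dist x y := \sum_t ((x t - y t) + (y t - x t)).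

Lemma dist_apply_exchange x y a b c d : uniq [:: a; b; c; d] ->
  y a < x a -> y b < x b -> x c < y c -> x d < y d ->
  dist (apply_exchange x a b c d) y < dist x y.
Proof.
move=> u ya yb yc yd.
move: u; rewrite /= !inE !negb_or => /and4P[/and3P[ab ac ad] /andP[bc bd] cd _].
apply: (@ltn_sum_at _ _ _ a) => [t|]; rewrite ffunE.
- have [->|ta] := eqVneq t a.
    by rewrite (negbTE ab) (negbTE ac) (negbTE ad) /=; clear -ya; lia.
  have [->|tb] := eqVneq t b; first by rewrite (negbTE bc) (negbTE bd) /=; clear -yb; lia.
  have [->|tc] := eqVneq t c; first by rewrite (negbTE cd) /=; clear -yc; lia.
  by have [->|td] := eqVneq t d; rewrite /=; clear -yd; lia.
- by rewrite eqxx (negbTE ab) (negbTE ac) (negbTE ad) /=; clear -ya; lia.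
Qed.

Lemma reachable_step x y z : exchange_step x y -> reachable y z -> reachable x z.
Proof. by move=> xy; apply: rt_trans; apply: rt_step. Qed.

Section TwoWayTable.

Variable k : 'I_n.

Definition clear_bit t := set_bit k false t.
Definition rest_odd t := parity (clear_bit t).
(* The cells of the two-way marginal of factor k and the last factor, whose
   level is the parity. *)
Definition two_way_cell (u v : bool) t := (t k == u) && (parity t == v).
Definition two_way x u v := wsum x (two_way_cell u v).

Lemma clear_bit_at j t : j != k -> clear_bit t j = t j.
Proof. by move=> jk; rewrite set_bitE (negbTE jk). Qed.

Lemma clear_set_bit v t : clear_bit (set_bit k v t) = clear_bit t.
Proof. exact: set_bit_set. Qed.

Lemma clear_bitK t : set_bit k (t k) (clear_bit t) = t.
Proof. by rewrite set_bit_set set_bit_id. Qed.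

Lemma clear_bit_eq u t : clear_bit u = clear_bit t -> u = set_bit k (u k) t.
Proof. by move=> cu; rewrite -{1}(clear_bitK u) cu /clear_bit set_bit_set. Qed.

Lemma clear_bit_k t : clear_bit t k = false.
Proof. by rewrite set_bitE eqxx. Qed.

Lemma parity_rest t : parity t = rest_odd t (+) t k.
Proof. by rewrite /rest_odd parity_set_bit addbF -addbA addbb addbF. Qed.

Lemma two_way_cell_rest u v t : two_way_cell u v t -> rest_odd t = v (+) u.
Proof.
by rewrite /two_way_cell parity_rest => /andP[/eqP-> /eqP<-]; rewrite -addbA addbb addbF.
Qed.

Lemma two_way_total x : total x =
  two_way x false false + two_way x false true + two_way x true false + two_way x true true.
Proof.
rewrite /total /two_way -!wsumD; apply: eq_wsum => t; rewrite /two_way_cell.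
by case: (t k); case: (parity t).
Qed.

Lemma two_way_margin x : margin k x = two_way x true false + two_way x true true.
Proof.
rewrite /margin /two_way -!wsumD; apply: eq_wsum => t; rewrite /two_way_cell.
by case: (t k); case: (parity t).
Qed.

Lemma two_way_odd x : odd_count x = two_way x false true + two_way x true true.
Proof.
rewrite /odd_count /two_way -!wsumD; apply: eq_wsum => t; rewrite /two_way_cell.
by case: (t k); case: (parity t).
Qed.

Lemma two_way_rest_odd x :
  wsum x rest_odd = two_way x false true + two_way x true false.
Proof.
rewrite /two_way -!wsumD; apply: eq_wsum => t; rewrite /two_way_cell parity_rest.
by case: (t k); case: (rest_odd t).
Qed.

Lemma two_way_rest_even x :
  wsum x (fun t => ~~ rest_odd t) = two_way x false false + two_way x true true.
Proof.
rewrite /two_way -!wsumD; apply: eq_wsum => t; rewrite /two_way_cell parity_rest.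
by case: (t k); case: (rest_odd t).
Qed.

Lemma two_way_witness x u v : 0 < two_way x u v -> exists t, 0 < x t /\ two_way_cell u v t.
Proof. by case/wsum_gt0 => t [xt]; rewrite lt0b; exists t. Qed.

Lemma clear_bit_neq a b : clear_bit a != clear_bit b -> exists2 j, j != k & a j != b j.
Proof.
case/neq_ffun=> j; have [->|jk] := eqVneq j k; first by rewrite !clear_bit_k.
by rewrite !clear_bit_at // => abj; exists j.
Qed.

Definition mixed_rests e x := [exists a, exists b, [&& 0 < x a, 0 < x b,
  two_way_cell true (~~ e) a, two_way_cell false e b & clear_bit a != clear_bit b]].

Lemma mixed_rests_step e x : mixed_rests e x ->
  exists2 x', exchange_step x x' & two_way x' true true + ~~ e = two_way x true true + e.
Proof.
case/existsP=> a /existsP[b /and5P[xa xb ca cb /clear_bit_neq[j jk abj]]].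
move: ca cb; rewrite /two_way_cell => /andP[/eqP ak /eqP pa] /andP[/eqP bk /eqP pb].
have kj : k != j by rewrite eq_sym.
have abk : a k != b k by rewrite ak bk.
have pab : parity a != parity b by rewrite pa pb; case: (e).
have ex := swap_exchange abj kj abk pab; have [u _ _] := ex.
have ab : a != b by case/andP: u; rewrite inE negb_or => /andP[].
exists (apply_exchange x a b (set_bit j (b j) a) (set_bit j (a j) b)).
  by exists a, b, (set_bit j (b j) a), (set_bit j (a j) b).
have := wsum_apply_exchange (set_bit j (b j) a) (set_bit j (a j) b)
  (two_way_cell true true) ab xa xb.
rewrite /two_way /two_way_cell !parity_set_bit !set_bitE (negbTE kj) ak bk pa pb.
by move: abj; case: (e); case: (a j); case: (b j) => //= _; rewrite ?addn0.
Qed.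

Lemma common_rest e x t1 t2 : ~~ mixed_rests e x -> 0 < x t1 -> 0 < x t2 ->
  two_way_cell true (~~ e) t1 -> two_way_cell false e t2 ->
  forall t, 0 < x t -> rest_odd t = e -> clear_bit t = clear_bit t1.
Proof.
move=> /existsPn none xt1 xt2 c1 c2.
have same a b : 0 < x a -> 0 < x b -> two_way_cell true (~~ e) a ->
    two_way_cell false e b -> clear_bit a = clear_bit b.
  move=> xa xb ca cb; apply/eqP; move/existsPn: (none a) => /(_ b).
  by rewrite xa xb ca cb /= negbK.
move=> t xt et; case tk: (t k).
- have ct : two_way_cell true (~~ e) t.
    by rewrite /two_way_cell parity_rest tk et; case: (e).
  by rewrite (same t t2) // (same t1 t2).
- have ct : two_way_cell false e t by rewrite /two_way_cell parity_rest tk et addbF !eqxx.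
  exact/esym/same.
Qed.

Lemma rest_even_count_le x y t1 s1 : stats x = stats y ->
  rest_odd t1 = false -> rest_odd s1 = true ->
  (forall t, 0 < x t -> rest_odd t = false -> clear_bit t = clear_bit t1) ->
  (forall t, 0 < y t -> rest_odd t = true -> clear_bit t = clear_bit s1) ->
  wsum x (fun t => ~~ rest_odd t) <= wsum y (fun t => ~~ rest_odd t).
Proof.
move=> hs et1 es1 ux uy.
have : clear_bit t1 != clear_bit s1.
  by apply: contraTneq isT => e; move: et1 es1; rewrite /rest_odd e => ->.
case/clear_bit_neq=> j jk ts.
apply: (@leq_trans (wsum x (fun t => t j == t1 j))).
  apply: leq_wsum => t xt; case et: (rest_odd t) => //=.
  by rewrite -(clear_bit_at t jk) (ux t xt et) clear_bit_at // eqxx.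
rewrite (stats_bit_count j (t1 j) hs).
apply: leq_wsum => t yt; case et: (rest_odd t) => /=; last by case: (_ == _).
rewrite -(clear_bit_at t jk) (uy t yt et) clear_bit_at //.
by move: ts; case: (t1 j); case: (s1 j).
Qed.

Lemma two_way_gap_step x y : stats x = stats y ->
  two_way y true true < two_way x true true ->
  (exists2 x', exchange_step x x' & (two_way x' true true).+1 = two_way x true true) \/
  (exists2 y', exchange_step y y' & two_way y' true true = (two_way y true true).+1).
Proof.
move=> hs lt.
have [mx | nmx] := boolP (mixed_rests false x).
  left; have [x' st e] := mixed_rests_step mx.
  by exists x' => //; move: e => /=; rewrite addn0 addn1.
have [my | nmy] := boolP (mixed_rests true y).
  right; have [y' st e] := mixed_rests_step my.
  by exists y' => //; move: e => /=; rewrite addn0 addn1.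
(* Otherwise the even-rest cells of x share one rest and the odd-rest cells of y
   share another one; a coordinate separating the two rests has a larger margin
   in x than in y. *)
exfalso; move/statsP: (hs) => [ht hm ho].
have [] : [/\ 0 < two_way x true true, 0 < two_way x false false,
    0 < two_way y true false, 0 < two_way y false true &
    wsum y (fun t => ~~ rest_odd t) < wsum x (fun t => ~~ rest_odd t)].
  clear -lt hm ht ho; move: lt (hm k) ht ho.
  rewrite !two_way_margin !two_way_total !two_way_odd !two_way_rest_even.
  by move=> *; split; lia.
move=> /two_way_witness[t1 [xt1 c1]] /two_way_witness[t2 [xt2 c2]].
move=> /two_way_witness[s1 [ys1 d1]] /two_way_witness[s2 [ys2 d2]].
apply/negP; rewrite -leqNgt.
apply: (rest_even_count_le hs (two_way_cell_rest c1) (two_way_cell_rest d1)).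
- exact: common_rest nmx xt1 xt2 c1 c2.
- exact: common_rest nmy ys1 ys2 d1 d2.
Qed.

Lemma equalize_two_way x y : stats x = stats y -> exists x' y',
  [/\ reachable x x', reachable y y' & two_way x' true true = two_way y' true true].
Proof.
move=> hs.
move gap : (two_way x true true - two_way y true true +
            (two_way y true true - two_way x true true)) => m.
elim: m x y hs gap => [|m IH] x y hs gap.
  by exists x, y; split; [exact: rt_refl | exact: rt_refl | lia].
wlog lt : x y hs gap / two_way y true true < two_way x true true.
  move=> W; case: (ltngtP (two_way y true true) (two_way x true true)) => [lt|lt|eq].
  - exact: W.
  - by have [y' [x' [ry rx e]]] := W y x (esym hs) ltac:(clear -gap; lia) lt; exists x', y'.
  - by exfalso; clear -gap eq; lia.
case: (two_way_gap_step hs lt) => [[x' st e] | [y' st e]].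
- have hs' : stats x' = stats y by rewrite -(exchange_step_stats st).
  have [x'' [y'' [rx ry e']]] := IH x' y hs' ltac:(clear -gap lt e; lia).
  by exists x'', y''; split=> //; apply: reachable_step st rx.
- have hs' : stats x = stats y' by rewrite -(exchange_step_stats st).
  have [x'' [y'' [rx ry e']]] := IH x y' hs' ltac:(clear -gap lt e; lia).
  by exists x'', y''; split=> //; apply: reachable_step st ry.
Qed.

Lemma two_way_eq x y u v : stats x = stats y ->
  two_way x true true = two_way y true true -> two_way x u v = two_way y u v.
Proof.
case/statsP=> ht hm ho; move: (hm k) ht ho.
rewrite !two_way_margin !two_way_total !two_way_odd.
by case: u; case: v => *; lia.
Qed.

Definition project x : table n := [ffun u => wsum x (fun t => clear_bit t == u)].

Lemma wsum_project x G : wsum (project x) G = wsum x (fun t => G (clear_bit t)).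
Proof.
rewrite /wsum; under eq_bigr do rewrite ffunE /wsum big_distrl.
rewrite exchange_big; apply: eq_bigr => t _ /=.
rewrite -(sum_delta G) big_distrr; apply: eq_bigr => u _ /=.
by rewrite eq_sym mulnA.
Qed.

Lemma project_gt0 x u : 0 < project x u -> exists2 t, clear_bit t = u & 0 < x t.
Proof. by rewrite ffunE => /wsum_gt0[t [xt]]; rewrite lt0b => /eqP; exists t. Qed.

Lemma leq_project x t : x t <= project x (clear_bit t).
Proof. by rewrite ffunE /wsum (bigD1 t) //= eqxx muln1 leq_addr. Qed.

Lemma project_pair x t : project x (clear_bit t) = x (clear_bit t) + x (set_bit k true t).
Proof.
have t01 : clear_bit t != set_bit k true t.
  by apply/eqP => /(congr1 (fun s : bits n => s k)); rewrite !set_bitE eqxx.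
rewrite ffunE /wsum (bigD1 (clear_bit t)) ?clear_set_bit //= (bigD1 (set_bit k true t)) /=;
  last by rewrite eq_sym.
rewrite !clear_set_bit !eqxx !muln1 addnA big1 ?addn0 // => s /andP[s0 s1].
case: eqP => [cs|_]; last exact: muln0.
by move: s0 s1; rewrite (clear_bit_eq cs); case: (s k); rewrite ?eqxx.
Qed.

Lemma project_stats x y : stats x = stats y ->
  two_way x true true = two_way y true true -> stats (project x) = stats (project y).
Proof.
move=> hs hj; have /statsP[ht hm ho] := hs.
apply/statsP; split=> [|j|]; rewrite /total /margin /odd_count !wsum_project /=.
- exact: ht.
- have [->|jk] := eqVneq j k.
    by rewrite /wsum !big1 // => t _; rewrite clear_bit_k muln0.
  under eq_wsum do rewrite clear_bit_at //; under [RHS]eq_wsum do rewrite clear_bit_at //.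
  exact: hm.
- rewrite -!/(wsum _ rest_odd) !two_way_rest_odd.
  by rewrite (two_way_eq _ _ hs hj) (two_way_eq _ _ hs hj).
Qed.

Lemma project_supported_below m x : k = m :> nat ->
  supported_below m.+1 x -> supported_below m (project x).
Proof.
move=> km sx u /project_gt0[t <- xt] j mj; rewrite set_bitE.
case: eqP => // /eqP jk; apply: (sx t xt j).
by rewrite ltn_neqAle mj andbT -km; apply: contra jk => /eqP/val_inj ->.
Qed.

Lemma project_apply_exchange x a b c d :
  clear_bit a != clear_bit b -> 0 < x a -> 0 < x b ->
  project (apply_exchange x a b c d) =
  apply_exchange (project x) (clear_bit a) (clear_bit b) (clear_bit c) (clear_bit d).
Proof.
move=> ab' xa xb; have ab : a != b by apply: contraNneq ab' => ->.
apply/ffunP => u; apply/(@addIn ((u == clear_bit a) + (u == clear_bit b))).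
rewrite !addnA apply_exchangeE //; try exact: leq_trans (leq_project _ _).
have := wsum_apply_exchange c d (fun t => clear_bit t == u) ab xa xb.
by rewrite !ffunE !(eq_sym u).
Qed.

Lemma lift_exchange a b c' d' : exchange (clear_bit a) (clear_bit b) c' d' ->
  exists c d, [/\ exchange a b c d, clear_bit c = c', clear_bit d = d' &
    two_way_cell true true a + two_way_cell true true b =
    two_way_cell true true c + two_way_cell true true d].
Proof.
case=> u hj hp.
have [ck dk] : c' k = false /\ d' k = false.
  by have := hj k; rewrite !clear_bit_k; case: (c' k); case: (d' k).
have clear_id t : t k = false -> clear_bit t = t.
  by move=> tk; rewrite /clear_bit -tk set_bit_id.
(* c' takes the k-th bit of whichever of a, b matches its parity. *)
pose sw := parity c' != rest_odd a.
exists (set_bit k (if sw then b k else a k) c'), (set_bit k (if sw then a k else b k) d').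
rewrite !clear_set_bit (clear_id c' ck) (clear_id d' dk); split=> //.
- split.
  + apply: (@map_uniq _ _ clear_bit).
    by rewrite /= !clear_set_bit (clear_id c' ck) (clear_id d' dk).
  + move=> j; rewrite !set_bitE; have [->|jk] := eqVneq j k.
      by case: (sw); rewrite // addnC.
    by rewrite -(clear_bit_at a jk) -(clear_bit_at b jk) hj.
  + move: hp; rewrite -/(rest_odd a) -/(rest_odd b) !parity_set_bit ck dk.
    rewrite (parity_rest a) (parity_rest b) /sw.
    case: (rest_odd a); case: (rest_odd b); case: (parity c'); case: (parity d');
    by case: (a k); case: (b k).
- move: hp; rewrite -/(rest_odd a) -/(rest_odd b) /two_way_cell !parity_set_bit.
  rewrite !set_bitE !eqxx ck dk (parity_rest a) (parity_rest b) /sw.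
  case: (rest_odd a); case: (rest_odd b); case: (parity c'); case: (parity d');
  by case: (a k); case: (b k).
Qed.

Lemma lift_exchange_step x Z : exchange_step (project x) Z -> exists2 x',
  exchange_step x x' & project x' = Z /\ two_way x' true true = two_way x true true.
Proof.
case=> a' [b' [c' [d' [ex' xa' xb' ->]]]].
have [a ea xa] := project_gt0 xa'; have [b eb xb] := project_gt0 xb'; subst a' b'.
have [c [d [ex <- <- ej]]] := lift_exchange ex'.
have [u _ _] := ex'; have ab' : clear_bit a != clear_bit b.
  by case/andP: u; rewrite inE negb_or => /andP[].
have ab : a != b by apply: contraNneq ab' => ->.
exists (apply_exchange x a b c d); first by exists a, b, c, d.
by split; [exact: project_apply_exchange | exact: wsum_exchange].
Qed.

Lemma lift_reachable X Y : reachable X Y -> forall x, project x = X -> exists2 x',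
  reachable x x' & project x' = Y /\ two_way x' true true = two_way x true true.
Proof.
elim=> [U V st | U | U V W _ IH1 _ IH2] x px.
- rewrite -px in st; have [x' st' pe] := lift_exchange_step st.
  by exists x' => //; apply: rt_step.
- by exists x => //; apply: rt_refl.
- have [x1 r1 [p1 e1]] := IH1 x px; have [x2 r2 [p2 e2]] := IH2 x1 p1.
  by exists x2; [exact: rt_trans r1 r2 | rewrite e2 e1].
Qed.

Lemma swap_k_step x y a b : a k -> ~~ b k -> rest_odd a = rest_odd b ->
  clear_bit a != clear_bit b -> y a < x a -> y b < x b -> project x = project y ->
  exists2 x', exchange_step x x' & [/\ dist x' y < dist x y,
    project x' = project x & two_way x' true true = two_way x true true].
Proof.
move=> ak /negbTE bk eab ab' ya yb pxy.
have [j jk abj] := clear_bit_neq ab'.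
have abk : a k != b k by rewrite ak bk.
have pab : parity a != parity b by rewrite !parity_rest eab ak bk; case: (rest_odd b).
have ex := swap_exchange abk jk abj pab; rewrite ak bk in ex.
have [u _ _] := ex.
have xa : 0 < x a := leq_ltn_trans (leq0n _) ya.
have xb : 0 < x b := leq_ltn_trans (leq0n _) yb.
have ea : set_bit k true a = a by rewrite -ak set_bit_id.
have eb : clear_bit b = b by rewrite /clear_bit -bk set_bit_id.
have yc : x (clear_bit a) < y (clear_bit a).
  by have := project_pair x a; rewrite pxy !project_pair ea; clear -ya; lia.
have yd : x (set_bit k true b) < y (set_bit k true b).
  by have := project_pair x b; rewrite pxy !project_pair eb; clear -yb; lia.
exists (apply_exchange x a b (clear_bit a) (set_bit k true b)).
  by exists a, b, (clear_bit a), (set_bit k true b); split.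
split.
- exact: dist_apply_exchange.
- rewrite project_apply_exchange // !clear_set_bit.
  exact: apply_exchange_id.
- apply: wsum_exchange => //; first by apply: contraNneq ab' => ->.
  rewrite /two_way_cell !parity_rest clear_bit_k !set_bitE eqxx ak bk /rest_odd.
  by rewrite !clear_set_bit -/(rest_odd a) -/(rest_odd b) eab; case: (rest_odd b).
Qed.

Lemma same_projection_step x y : x != y -> stats x = stats y -> project x = project y ->
  two_way x true true = two_way y true true -> exists2 x', exchange_step x x' &
    [/\ dist x' y < dist x y, project x' = project y &
         two_way x' true true = two_way y true true].
Proof.
move=> /neq_ffun[t xyt] hs pxy hj.
set t1 := set_bit k true t; set t0 := clear_bit t; set e := rest_odd t.
have pair : x t0 + x t1 = y t0 + y t1 by rewrite -!project_pair pxy.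
have step a b : a k -> ~~ b k -> rest_odd a = rest_odd b -> clear_bit a != clear_bit b ->
    y a < x a -> y b < x b -> exists2 x', exchange_step x x' &
    [/\ dist x' y < dist x y, project x' = project y &
         two_way x' true true = two_way y true true].
  move=> ak bk eab ab' ya yb.
  have [x' st [lt px' jx']] := swap_k_step ak bk eab ab' ya yb pxy.
  by exists x' => //; rewrite px' jx'.
have rest_t0 : rest_odd t0 = e by rewrite /t0 /e /rest_odd clear_set_bit.
have rest_t1 : rest_odd t1 = e by rewrite /t1 /e /rest_odd clear_set_bit.
have clear_t0 : clear_bit t0 = clear_bit t by rewrite /t0 clear_set_bit.
have clear_t1 : clear_bit t1 = clear_bit t by rewrite /t1 clear_set_bit.
case: (ltngtP (x t1) (y t1)) => [lt1|lt1|eq1].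
- have A1 : two_way_cell true (~~ e) t1.
    by rewrite /two_way_cell parity_rest rest_t1 /t1 set_bitE eqxx /= addbT eqxx.
  have [u Au yu] := wsum_lt_witness (two_way_eq true (~~ e) hs hj) A1 lt1.
  move: (Au) => /andP[/eqP uk _].
  apply: (step u t0) => //; first by rewrite /t0 clear_bit_k.
  - by rewrite (two_way_cell_rest Au) rest_t0 addbT negbK.
  - apply: contraTneq yu => cu; rewrite clear_t0 in cu.
    by rewrite (clear_bit_eq cu) uk -/t1 -leqNgt ltnW.
  - by clear -pair lt1; lia.
- have A0 : two_way_cell false e t0.
    by rewrite /two_way_cell parity_rest rest_t0 clear_bit_k addbF !eqxx.
  have [v Av yv] := wsum_lt_witness (two_way_eq false e hs hj) A0 ltac:(clear -pair lt1; lia).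
  move: (Av) => /andP[/eqP vk _].
  apply: (step t1 v) => //; first by rewrite set_bitE eqxx.
  - by rewrite vk.
  - by rewrite (two_way_cell_rest Av) rest_t1 addbF.
  - apply: contraTneq yv => cv; rewrite clear_t1 in cv.
    rewrite (clear_bit_eq (esym cv)) vk -/(clear_bit t) -/t0 -leqNgt.
    by apply: ltnW; clear -pair lt1; lia.
- have e0 : x t0 = y t0 by move: pair; rewrite eq1 => /addIn.
  move: xyt; rewrite (clear_bit_eq (erefl (clear_bit t))).
  by case: (t k); rewrite -/t0 -/t1 ?eq1 ?e0 eqxx.
Qed.

Lemma same_projection_reachable x y : stats x = stats y -> project x = project y ->
  two_way x true true = two_way y true true -> reachable x y.
Proof.
move: {2}(dist x y) (leqnn (dist x y)) => m.
elim: m x => [|m IH] x hm hs hp hj; have [->|ne] := eqVneq x y; try exact: rt_refl.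
  have [x' _ [lt _ _]] := same_projection_step ne hs hp hj.
  by move: lt; rewrite leqn0 in hm; rewrite (eqP hm).
have [x' st [lt hp' hj']] := same_projection_step ne hs hp hj.
have hs' : stats x' = stats y by rewrite -(exchange_step_stats st).
exact: reachable_step st (IH x' (leq_trans lt hm) hs' hp' hj').
Qed.

End TwoWayTable.

Lemma reachable_of_supported_below m : m <= n -> forall x y,
  supported_below m x -> supported_below m y -> stats x = stats y -> reachable x y.
Proof.
elim: m => [|m IH] lemn x y sx sy hs.
  have only0 z t : supported_below 0 z -> 0 < z t -> t = [ffun=> false].
    by move=> sz zt; apply/ffunP => j; rewrite ffunE (sz t zt j).
  have zero_elsewhere z t : supported_below 0 z -> t != [ffun=> false] -> z t = 0.
    by move=> sz; case: (posnP (z t)) => // /(only0 z t sz) ->; rewrite eqxx.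
  have total0 z : supported_below 0 z -> total z = z [ffun=> false].
    move=> sz; rewrite /total /wsum (bigD1 [ffun=> false]) //= muln1 big1 ?addn0 //.
    by move=> t nt; rewrite zero_elsewhere.
  suff -> : x = y by apply: rt_refl.
  apply/ffunP => t; have [->|nt] := eqVneq t [ffun=> false].
    by rewrite -total0 // -total0 //; case/statsP: hs.
  by rewrite !zero_elsewhere.
pose k := Ordinal lemn.
have [x1 [y1 [rx ry ej]]] := equalize_two_way k hs.
have hs1 : stats x1 = stats y1 by rewrite -(reachable_stats rx) -(reachable_stats ry).
have sx1 := reachable_supported_below rx sx; have sy1 := reachable_supported_below ry sy.
have rp := IH (ltnW lemn) _ _ (project_supported_below (k := k) (erefl m) sx1)
  (project_supported_below (k := k) (erefl m) sy1) (project_stats hs1 ej).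
have [x2 r2 [p2 e2]] := lift_reachable rp (erefl _).
have hs2 : stats x2 = stats y1 by rewrite -(reachable_stats r2).
apply: rt_trans rx _; apply: rt_trans r2 _.
apply: rt_trans (same_projection_reachable hs2 p2 (etrans e2 ej)) _.
exact: reachable_sym.
Qed.

Lemma stats_reachable x y : stats x = stats y -> reachable x y.
Proof.
apply: (reachable_of_supported_below (leqnn n)) => t _ j;
  by rewrite leqNgt ltn_ord.
Qed.

End Exchanges.

Section ModelMatrix.

Variable p : nat.
Implicit Types (x y base : nvec p) (a b c d : cell p).

Import GRing.Theory.
Local Open Scope ring_scope.

Lemma sign_mul_nat (v : bool) (w : nat) :
  (-1) ^+ v * w%:Z = w%:Z - 2 * (v * w)%N%:Z.
Proof. by case: v; rewrite ?expr1 ?expr0 ?mul1n ?mul0n ?mulN1r ?mul1r //= ?subr0; lia. Qed.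

Lemma Mt_intercept x : Mt (fun i => (x i)%:Z) None = (total x)%:Z.
Proof.
rewrite /Mt /total /wsum -natz natr_sum; apply: eq_bigr => i _ /=.
by rewrite mul1r muln1 natz.
Qed.

Lemma Mt_factor x m :
  Mt (fun i => (x i)%:Z) (Some (Some m)) = (total x)%:Z - 2 * (margin m x)%:Z.
Proof.
rewrite /Mt /total /margin /wsum -!natz !natr_sum mulr_sumr -sumrB.
by apply: eq_bigr => i _ /=; rewrite sign_mul_nat muln1 mulnC !natz.
Qed.

Lemma Mt_product x :
  Mt (fun i => (x i)%:Z) (Some None) = (total x)%:Z - 2 * (odd_count x)%:Z.
Proof.
rewrite /Mt /total /odd_count /wsum -!natz !natr_sum mulr_sumr -sumrB.
by apply: eq_bigr => i _ /=; rewrite -signr_odd sign_mul_nat muln1 mulnC !natz.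
Qed.

Lemma fiberE base y : fiber base y <-> stats y = stats base.
Proof.
split=> [fy | /statsP[ht hm ho] c]; last first.
  by case: c => [[m|]|]; rewrite ?Mt_factor ?Mt_product ?Mt_intercept ?ht ?hm ?ho.
have ht : total y = total base by have := fy None; rewrite !Mt_intercept => -[].
apply/statsP; split=> // [m|].
  by have := fy (Some (Some m)); rewrite !Mt_factor ht; lia.
by have := fy (Some None); rewrite !Mt_product ht; lia.
Qed.

Definition exchange_move a b c d : vec p :=
  [ffun i => ((i == c) + (i == d))%N%:Z - ((i == a) + (i == b))%N%:Z].

Lemma Mt_exchange_move a b c d col : Mt (exchange_move a b c d) col =
  Mentry c col + Mentry d col - (Mentry a col + Mentry b col).
Proof.
have delta e : \sum_i Mentry i col * (i == e)%:Z = Mentry e col.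
  by rewrite (bigD1 e) //= eqxx mulr1 big1 ?addr0 // => i /negbTE ->; rewrite mulr0.
rewrite -(delta a) -(delta b) -(delta c) -(delta d) -!big_split -sumrB /Mt.
by apply: eq_bigr => i _; rewrite ffunE !PoszD mulrBr !mulrDr.
Qed.

Lemma Mentry_product a : Mentry a (Some None) = (-1) ^+ parity a.
Proof. by rewrite /= -signr_odd. Qed.

Lemma sign_sum (u v u' v' : bool) :
  (u + v = u' + v')%N -> (-1) ^+ u + (-1) ^+ v = (-1) ^+ u' + (-1) ^+ v' :> int.
Proof. by case: u; case: v; case: u'; case: v'. Qed.

Lemma exchange_sqfree a b c d : exchange a b c d -> sqfree_deg2_move (exchange_move a b c d).
Proof.
case=> u hj hp; split.
  move=> col; rewrite Mt_exchange_move; apply/eqP; rewrite subr_eq0; apply/eqP.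
  case: col => [[m|]|] //; first exact/esym/sign_sum/hj.
  by rewrite !Mentry_product; apply/esym/sign_sum.
have u' : uniq [:: c; d; a; b] by rewrite -(rot_uniq 2).
move: (u); rewrite /= !inE !negb_or => /and4P[/and3P[ab ac ad] /andP[bc bd] cd _].
have ne (i j : cell p) : i != j -> (i == j) = false by move/negbTE.
have ne' (i j : cell p) : j != i -> (i == j) = false by rewrite eq_sym; move/negbTE.
exists c, d, a, b; split; first exact: u'.
split; first by rewrite ffunE eqxx (ne _ _ cd) (ne' _ _ ac) (ne' _ _ bc).
split; first by rewrite ffunE eqxx (ne' _ _ cd) (ne' _ _ ad) (ne' _ _ bd).
split; first by rewrite ffunE eqxx (ne _ _ ac) (ne _ _ ad) (ne _ _ ab).
split; first by rewrite ffunE eqxx (ne _ _ bc) (ne _ _ bd) (ne' _ _ ab).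
move=> i; rewrite !inE !negb_or ffunE.
by case/and4P=> /negbTE -> /negbTE -> /negbTE -> /negbTE ->.
Qed.

Lemma sqfree_exchange_move z : sqfree_deg2_move z -> exists a b c d, z = exchange_move a b c d.
Proof.
case=> _ [c [d [a [b [u [zc [zd [za [zb z0]]]]]]]]].
move: (u); rewrite /= !inE !negb_or => /and4P[/and3P[cd ca cb] /andP[da db] ab _].
have ne (i j : cell p) : i != j -> (i == j) = false by move/negbTE.
have ne' (i j : cell p) : j != i -> (i == j) = false by rewrite eq_sym; move/negbTE.
exists a, b, c, d; apply/ffunP => i; rewrite ffunE.
have [|out] := boolP (i \in [:: c; d; a; b]); last first.
  rewrite z0 //; move: out; rewrite !inE !negb_or.
  by case/and4P=> /negbTE -> /negbTE -> /negbTE -> /negbTE ->.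
rewrite !inE => /or4P[] /eqP ->.
- by rewrite zc eqxx (ne _ _ cd) (ne _ _ ca) (ne _ _ cb).
- by rewrite zd eqxx (ne' _ _ cd) (ne _ _ da) (ne _ _ db).
- by rewrite za eqxx (ne' _ _ ca) (ne' _ _ da) (ne _ _ ab).
- by rewrite zb eqxx (ne' _ _ cb) (ne' _ _ db) (ne' _ _ ab).
Qed.

Lemma sqfree_moves_finite : exists s : seq (vec p), forall z, sqfree_deg2_move z -> z \in s.
Proof.
exists (codom (fun q : (cell p * cell p) * (cell p * cell p) =>
  exchange_move q.1.1 q.1.2 q.2.1 q.2.2)).
by move=> z /sqfree_exchange_move[a [b [c [d ->]]]]; apply: (codom_f _ ((a, b), (c, d))).
Qed.

Lemma exchange_step_edge base x y :
  fiber base x -> exchange_step x y -> edge (@sqfree_deg2_move p) base x y.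
Proof.
move=> fx st; have fy : fiber base y.
  by apply/fiberE; rewrite -(exchange_step_stats st); apply/fiberE.
case: st => a [b [c [d [ex xa xb ey]]]].
have [u _ _] := ex; have ab : a != b by case/andP: u; rewrite inE negb_or => /andP[].
split=> //; split=> //; exists (exchange_move a b c d); split; first exact: exchange_sqfree.
left=> i; rewrite ffunE ey; have := apply_exchangeE c d i ab xa xb.
move: (apply_exchange x a b c d i) (x i) (i == a) (i == b) (i == c) (i == d).
by move=> v w e1 e2 e3 e4 h; lia.
Qed.

Lemma reachable_connected base x y : reachable x y -> fiber base x ->
  clos_refl_trans _ (edge (@sqfree_deg2_move p) base) x y.
Proof.
elim=> [u v st | u | u v w r1 IH1 _ IH2] fu.
- exact/rt_step/exchange_step_edge.
- exact: rt_refl.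
- apply: rt_trans (IH1 fu) (IH2 _); apply/fiberE.
  by rewrite -(reachable_stats r1); apply/fiberE.
Qed.

Lemma sqfree_markov_basis : markov_basis (@sqfree_deg2_move p).
Proof.
split; [exact: sqfree_moves_finite | split; first by move=> z []].
move=> base x y fx fy; apply: (reachable_connected _ fx); apply: stats_reachable.
by move/fiberE: fx => ->; move/fiberE: fy => ->.
Qed.

End ModelMatrix.

Lemma count_lt_subpred (T : eqType) (P Q : pred T) s z :
  subpred Q P -> z \in s -> P z -> ~~ Q z -> count Q s < count P s.
Proof.
move=> QP; elim: s => //= y s IH; rewrite inE => /orP[/eqP<- Pz nQz | zs Pz nQz].
  by rewrite Pz (negbTE nQz) /= add0n add1n ltnS; apply: sub_count.
rewrite -addnS; apply: leq_add; last exact: IH.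
by case Qy: (Q y); rewrite ?(QP y Qy).
Qed.

Lemma minimal_markov_subbasis p (B0 : vec p -> Prop) : markov_basis B0 ->
  exists B, (forall z, B z -> B0 z) /\ minimal_markov_basis B.
Proof.
move=> mb0; have [[s sB0] _] := mb0.
pose size_in (B : vec p -> Prop) := count (fun z => `[< B z >]) s.
pose P N := `[< exists B, [/\ forall z, B z -> B0 z, markov_basis B & size_in B = N] >].
have exP : exists N, P N by exists (size_in B0); apply/asboolP; exists B0.
case: (ex_minnP exP) => N /asboolP[B [BB0 mb <-]] minN.
exists B; split=> //; split=> // B' B'B [z [Bz nB'z]] mb'.
have : size_in B <= size_in B'.
  by apply: minN; apply/asboolP; exists B'; split=> // w /B'B /BB0.
rewrite leqNgt => /negP; apply; apply: (count_lt_subpred (z := z)).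
- by move=> w /asboolP /B'B /asboolP.
- exact/sB0/BB0.
- exact/asboolP.
- exact/asboolPn.
Qed.

Theorem theorem1 (p : nat) (hp : (2 <= p)%N) :
  markov_basis (@sqfree_deg2_move p) /\
  exists B : vec p -> Prop,
    (forall z, B z -> sqfree_deg2_move z) /\ minimal_markov_basis B.
Proof.
have mb := sqfree_markov_basis p.
by split; last exact: minimal_markov_subbasis mb.
Qed.
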